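(* Let $(\mathbf A,\tau)$ be a state-morphism algebra and let $\theta_\tau=\{(x,y)\in A\times A:\tau(x)=\tau(y)\}$. If $\theta$ is a congruence of $\mathbf A$ with $\theta\subseteq\theta_\tau$, then $\theta$ is a congruence of $(\mathbf A,\tau)$. Moreover, if $x,y\in A$ satisfy $(x,y)\in\theta_\tau$, then $\Theta(x,y)=\Theta_\tau(x,y)$.
   Context: Let $F$ be an arbitrary algebraic type. A state-morphism on an algebra $\mathbf A$ of type $F$ is an endomorphism $\tau:\mathbf A\to\mathbf A$ with $\tau\circ\tau=\tau$; $(\mathbf A,\tau)$, viewed as an algebra of type $F$ extended by the unary operation $\tau$, is a state-morphism algebra. Its congruences are the congruences of $\mathbf A$ compatible with $\tau$. $\Theta(x,y)$ denotes the congruence of $\mathbf A$ generated by the pair $(x,y)$, and $\Theta_\tau(x,y)$ the congruence of $(\mathbf A,\tau)$ generated by $(x,y)$. *)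

Set Implicit Arguments.

(* A type F: a type of operation symbols [ops] with arities [ar].
   An algebra A of type F: a carrier [A] with, for each symbol f,
   an operation [op f : (Fin-indexed arguments) -> A]. *)
Definition args (A : Type) (n : nat) := {i : nat | i < n} -> A.

Definition interp (ops : Type) (ar : ops -> nat) (A : Type) :=
  forall f : ops, args A (ar f) -> A.

Definition is_endomorphism (ops : Type) (ar : ops -> nat) (A : Type)
  (op : interp ar A) (tau : A -> A) : Prop :=
  forall (f : ops) (a : args A (ar f)), tau (op f a) = op f (fun i => tau (a i)).

Definition is_state_morphism (ops : Type) (ar : ops -> nat) (A : Type)
  (op : interp ar A) (tau : A -> A) : Prop :=
  is_endomorphism op tau /\ (forall x, tau (tau x) = tau x).

Definition is_equivalence (A : Type) (R : A -> A -> Prop) : Prop :=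
  (forall x, R x x) /\ (forall x y, R x y -> R y x) /\
  (forall x y z, R x y -> R y z -> R x z).

Definition is_congruence (ops : Type) (ar : ops -> nat) (A : Type)
  (op : interp ar A) (R : A -> A -> Prop) : Prop :=
  is_equivalence R /\
  (forall (f : ops) (a b : args A (ar f)),
      (forall i, R (a i) (b i)) -> R (op f a) (op f b)).

Definition is_congruence_tau (ops : Type) (ar : ops -> nat) (A : Type)
  (op : interp ar A) (tau : A -> A) (R : A -> A -> Prop) : Prop :=
  is_congruence op R /\ (forall x y, R x y -> R (tau x) (tau y)).

Definition Cg (ops : Type) (ar : ops -> nat) (A : Type)
  (op : interp ar A) (x y : A) : A -> A -> Prop :=
  fun u v => forall R, is_congruence op R -> R x y -> R u v.

Definition Cg_tau (ops : Type) (ar : ops -> nat) (A : Type)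
  (op : interp ar A) (tau : A -> A) (x y : A) : A -> A -> Prop :=
  fun u v => forall R, is_congruence_tau op tau R -> R x y -> R u v.

Definition theta_tau (A : Type) (tau : A -> A) : A -> A -> Prop :=
  fun x y => tau x = tau y.

(* A congruence contained in the kernel θ_τ of τ is automatically τ-compatible:
   if τ x = τ y then (τ x, τ y) is a diagonal pair. The kernel of an endomorphism
   is a congruence, so when (x, y) ∈ θ_τ the congruence Θ(x, y) lies in θ_τ, is
   therefore a congruence of (A, τ), and so coincides with Θ_τ(x, y). *)
From Stdlib Require Import FunctionalExtensionality.

Set Implicit Arguments.

Section Congruences.

Variables (ops : Type) (ar : ops -> nat) (A : Type) (op : interp ar A).

Lemma congruence_tau_of_sub_kernel (tau : A -> A) (theta : A -> A -> Prop) :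
  is_congruence op theta ->
  (forall x y, theta x y -> theta_tau tau x y) ->
  is_congruence_tau op tau theta.
Proof.
  intros Htheta Hsub; split; [exact Htheta |].
  destruct Htheta as [[Hrefl _] _].
  intros x y Hxy; rewrite (Hsub x y Hxy); apply Hrefl.
Qed.

Lemma kernel_congruence (tau : A -> A) :
  is_endomorphism op tau -> is_congruence op (theta_tau tau).
Proof.
  intros Hend; unfold theta_tau; split; [split; [| split] |].
  - reflexivity.
  - intros x y Hxy; symmetry; exact Hxy.
  - intros x y z Hxy Hyz; rewrite Hxy; exact Hyz.
  - intros f a b Hab; rewrite !Hend; f_equal.
    apply functional_extensionality; exact Hab.
Qed.

Lemma Cg_congruence (x y : A) : is_congruence op (Cg op x y).
Proof.
  split; [split; [| split] |].
  - intros a R [[Hrefl _] _] _; apply Hrefl.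
  - intros a b Hab R HR Rxy; pose proof HR as [[_ [Hsym _]] _].
    apply Hsym, Hab; assumption.
  - intros a b c Hab Hbc R HR Rxy; pose proof HR as [[_ [_ Htrans]] _].
    apply Htrans with b; [apply Hab | apply Hbc]; assumption.
  - intros f a b Hab R HR Rxy; pose proof HR as [_ Hcomp].
    apply Hcomp; intro i; apply Hab; assumption.
Qed.

Lemma Cg_generator (x y : A) : Cg op x y x y.
Proof. intros R _ Rxy; exact Rxy. Qed.

Lemma Cg_sub_Cg_tau (tau : A -> A) (x y u v : A) :
  Cg op x y u v -> Cg_tau op tau x y u v.
Proof. intros Huv R [HR _] Rxy; exact (Huv R HR Rxy). Qed.

Lemma Cg_tau_sub_Cg (tau : A -> A) (x y u v : A) :
  is_congruence_tau op tau (Cg op x y) ->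
  Cg_tau op tau x y u v -> Cg op x y u v.
Proof. intros HCg Huv; exact (Huv _ HCg (Cg_generator x y)). Qed.

Lemma Cg_sub_kernel (tau : A -> A) (x y : A) :
  is_endomorphism op tau -> theta_tau tau x y ->
  forall u v, Cg op x y u v -> theta_tau tau u v.
Proof. intros Hend Hxy u v Huv; exact (Huv _ (kernel_congruence Hend) Hxy). Qed.

End Congruences.

Theorem lemma3p3 (ops : Type) (ar : ops -> nat) (A : Type)
  (op : interp ar A) (tau : A -> A) :
  is_state_morphism op tau ->
  (forall theta : A -> A -> Prop,
      is_congruence op theta ->
      (forall x y, theta x y -> theta_tau tau x y) ->
      is_congruence_tau op tau theta) /\
  (forall x y : A, theta_tau tau x y ->
      forall u v, Cg op x y u v <-> Cg_tau op tau x y u v).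
Proof.
  intros [Hend _]; split.
  - apply congruence_tau_of_sub_kernel.
  - intros x y Hxy u v; split.
    + apply Cg_sub_Cg_tau.
    + apply Cg_tau_sub_Cg, congruence_tau_of_sub_kernel.
      * apply Cg_congruence.
      * exact (Cg_sub_kernel Hend Hxy).
Qed.
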